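(* Let $q\ge 2$ be a prime power and $M,D\in\mathbb{N}$ with $D\ge 10$ and $M\le D^2$. Then \[ N_H(M,D)\le\frac{q(D-1)}{q\left(1-\sqrt{\frac{\ln D}{D}}\right)-1}. \]
   Context: $N_H(M,D)$ is the smallest length $r$ such that there exist $M$ vectors $\boldsymbol{p}_1,\ldots,\boldsymbol{p}_M\in\mathbb{F}_q^r$ with pairwise Hamming distance $d_H(\boldsymbol{p}_i,\boldsymbol{p}_j)\ge D$ for all $i\ne j$. *)

From mathcomp Require Import all_boot all_algebra.


Set Implicit Arguments.
Unset Strict Implicit.
Unset Printing Implicit Defensive.

Definition hamming (F : finFieldType) (r : nat) (u v : {ffun 'I_r -> F}) : nat :=
  #|[set k | u k != v k]|.

Definition code_ok (F : finFieldType) (M D r : nat) : bool :=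
  [exists p : {ffun 'I_M -> {ffun 'I_r -> F}},
     [forall i, forall j, (i != j) ==> (D <= hamming (p i) (p j))]].

Lemma code_ok_exists (F : finFieldType) (M D : nat) : exists r, code_ok F M D r.
Proof.
exists (M * D); apply/existsP.
exists [ffun i : 'I_M => [ffun k : 'I_(M * D) => if k %/ D == i then (1%R : F) else 0%R]].
apply/forallP => i; apply/forallP => j; apply/implyP => ij.
rewrite /hamming.
have lt t : t < D -> i * D + t < M * D.
  move=> tD; have := ltn_ord i => iM.
  apply: (@leq_trans (i.+1 * D)); first by rewrite mulSn addnC ltn_add2r.
  by rewrite leq_mul2r iM orbT.
pose g (t : 'I_D) : 'I_(M * D) := Ordinal (lt t (ltn_ord t)).
have ginj : injective g.
  by move=> a b /(congr1 val) /= /eqP; rewrite eqn_add2l => /eqP ab; apply: val_inj.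
have cD : #|[set g t | t in 'I_D]| = D by rewrite card_imset // card_ord.
rewrite -[X in X <= _]cD; apply: subset_leq_card; apply/subsetP => x /imsetP [t _ ->].
have hD : 0 < D := leq_ltn_trans (leq0n t) (ltn_ord t).
have e : (i * D + t) %/ D = i by rewrite divnMDl // divn_small // addn0.
rewrite inE !ffunE /= e eqxx.
have -> : (val i == val j) = false by apply/negbTE; apply: contra ij => /eqP h; apply/eqP/val_inj.
exact: GRing.oner_neq0.
Qed.

Definition N_H (F : finFieldType) (M D : nat) : nat :=
  ex_minn (code_ok_exists F M D).

(* Greedy (Gilbert-Varshamov) construction: if M times the size of every Hamming
   ball of radius D - 1 in F^n is at most q^n, then M words at pairwise distance
   >= D fit in F^n, so N_H(M, D) <= n.  The ball is bounded by a Chernoff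
   argument: for 0 <= x <= 1, |B| x^(D-1) <= sum_v x^d(u,v) = (1 + (q-1) x)^n, and
   with x = exp(-l) Hoeffding's lemma gives |B| <= q^n exp(-2 t^2 / n) where
   t = n (q-1)/q - (D-1).  For n the integer part of the claimed bound one has
   t^2 / n >= ln D, hence D^2 |B| <= q^n, which suffices since M <= D^2. *)

From mathcomp Require Import all_boot all_algebra.
From Stdlib Require Import Reals Psatz.
From Coquelicot Require Import Coquelicot.
From mathcomp Require Import Rstruct.

Set Implicit Arguments.
Unset Strict Implicit.
Unset Printing Implicit Defensive.

Import GRing.Theory Num.Theory.

Local Open Scope nat_scope.

Section HammingCodes.

(* Importing Reals rebinds [_ ^ _] on nat to Nat.pow; restore ssrnat's expn. *)
Import ssrnat.

Lemma card_bigcup_seq_le (I : Type) (T : finType) (s : seq I) (A : I -> {set T}) :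
  #|\bigcup_(i <- s) A i| <= \sum_(i <- s) #|A i|.
Proof.
elim: s => [|i s IHs]; first by rewrite !big_nil cards0.
by rewrite !big_cons (leq_trans (leq_card_setU _ _)) ?leq_add2l.
Qed.

Section HammingBall.

Variables (F : finFieldType) (r : nat).
Local Notation V := {ffun 'I_r -> F}.

Lemma hamming_sym (u v : V) : hamming u v = hamming v u.
Proof. by apply: eq_card => k; rewrite !inE eq_sym. Qed.

Definition hamming_ball (D : nat) (u : V) : {set V} := [set v | hamming u v < D].

Lemma exists_far_seq (D M : nat) :
  (forall u : V, M * #|hamming_ball D u| <= #|F| ^ r) ->
  forall m, m <= M ->
  exists2 s : seq V, size s = m & pairwise (fun v w => D <= hamming v w) s.
Proof.
move=> ball_small; elim=> [|m IHm] lt_mM; first by exists [::].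
have [s size_s far_s] := IHm (ltnW lt_mM).
pose covered := \bigcup_(w <- s) hamming_ball D w.
have : 0 < #|~: covered|.
  rewrite -(ltn_add2l #|covered|) addn0 cardsC.
  rewrite card_ffun card_ord -(ltn_pmul2l (leq_ltn_trans (leq0n m) lt_mM)).
  apply: (@leq_ltn_trans (\sum_(w <- s) M * #|hamming_ball D w|)).
    by rewrite -big_distrr leq_mul2l card_bigcup_seq_le orbT.
  apply: (@leq_ltn_trans (m * #|F| ^ r)).
    by rewrite -size_s -sum1_size big_distrl /= leq_sum // => w _; rewrite mul1n.
  by rewrite ltn_pmul2r ?expn_gt0 ?(leq_trans _ (card_finNzRing_gt1 F)).
rewrite card_gt0 => /set0Pn[v].
rewrite inE /covered bigcup_seq => v_far.
exists (v :: s); first by rewrite /= size_s.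
rewrite pairwise_cons far_s andbT; apply/allP=> w ws.
by rewrite leqNgt; apply: contra v_far => wvD; apply/bigcupP; exists w; rewrite // inE hamming_sym.
Qed.

Lemma gilbert_varshamov (D M : nat) :
  (forall u : V, M * #|hamming_ball D u| <= #|F| ^ r) -> code_ok F M D r.
Proof.
move=> ball_small; have [s size_s /(pairwiseP GRing.zero) far_s] := exists_far_seq ball_small (leqnn M).
apply/existsP; exists [ffun i : 'I_M => nth GRing.zero s i].
apply/forallP=> i; apply/forallP=> j; apply/implyP=> neq_ij; rewrite !ffunE.
have [lt_ij|lt_ji|eq_ij] := ltngtP i j.
- by apply: far_s; rewrite ?inE ?size_s.
- by rewrite hamming_sym; apply: far_s; rewrite ?inE ?size_s.
- by rewrite (val_inj eq_ij) eqxx in neq_ij.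
Qed.

End HammingBall.

Section HammingBallWeight.

Variables (F : finFieldType) (r : nat).
Local Notation V := {ffun 'I_r -> F}.
Local Open Scope ring_scope.

Lemma sum_pow_hamming (R : comPzSemiRingType) (u : V) (x : R) :
  \sum_(v : V) x ^+ hamming u v = (1 + (#|F|.-1)%:R * x) ^+ r.
Proof.
have hamming_prod v : x ^+ hamming u v = \prod_(k < r) (if u k != v k then x else 1).
  by rewrite -prodr_const big_mkcond; apply: eq_bigr => k _; rewrite inE.
rewrite (eq_bigr _ (fun v _ => hamming_prod v)).
rewrite -(bigA_distr_bigA (fun k a => if u k != a then x else 1)) /=.
rewrite -[r in RHS]card_ord -prodr_const; apply: eq_bigr => k _.
rewrite (bigD1 (u k)) //= eqxx (eq_bigr (fun _ => x)) => [|a]; last by rewrite eq_sym => ->.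
by rewrite sumr_const cardC1 mulr_natl.
Qed.

Lemma card_hamming_ball_le (R : numDomainType) (D : nat) (u : V) (x : R) :
  0 <= x <= 1 ->
  #|hamming_ball D u|%:R * x ^+ D.-1 <= (1 + (#|F|.-1)%:R * x) ^+ r.
Proof.
case/andP=> x_ge0 x_le1.
rewrite -(sum_pow_hamming u) mulr_natl -sumr_const big_mkcond /=.
apply: ler_sum => v _; case: ifP => [|_]; last exact: exprn_ge0.
by rewrite inE => uvD; apply: ler_wiXn2l => //; rewrite -ltnS (leq_trans uvD) ?leqSpred.
Qed.

End HammingBallWeight.

End HammingCodes.

Lemma N_H_le (F : finFieldType) (M D r : nat) : code_ok F M D r -> N_H F M D <= r.
Proof. by rewrite /N_H; case: ex_minnP => m _; apply. Qed.

Section RealEstimates.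

Local Open Scope R_scope.

Lemma exp_le_exp x y : x <= y -> exp x <= exp y.
Proof. by case=> [/exp_increasing/Rlt_le|->]; [|apply: Rle_refl]. Qed.

Lemma exp_pow x n : exp x ^ n = exp (INR n * x).
Proof.
elim: n => [|n IHn]; first by rewrite /= Rmult_0_l exp_0.
by rewrite S_INR /= IHn -exp_plus; congr exp; ring.
Qed.

Lemma le_of_derive_nonneg (f df : R -> R) (a b : R) : a <= b ->
  (forall c, a <= c <= b -> is_derive f c (df c)) ->
  (forall c, a <= c <= b -> 0 <= df c) -> f a <= f b.
Proof.
move=> [lt_ab|<-] f_deriv df_ge0; last exact: Rle_refl.
have [c [f_ba c_ab]] : exists c, f b - f a = df c * (b - a) /\ a < c < b.
  by apply: MVT_cor2 => // c c_ab; apply/is_derive_Reals/f_deriv.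
have : 0 <= df c * (b - a) by apply: Rmult_le_pos; [apply: df_ge0; lra | lra].
lra.
Qed.

(* The left-hand side is E[exp(-l X)] for X ~ Bernoulli(p). *)
Lemma hoeffding_bernoulli (p l : R) : 0 <= p <= 1 -> 0 <= l ->
  1 - p + p * exp (- l) <= exp (- p * l + l ^ 2 / 8).
Proof.
move=> p01 l_ge0.
pose g x := 1 - p + p * exp (- x).
have g_gt0 x : 0 < g x by rewrite /g; have := exp_pos (- x); nra.
pose phi x := - p * x + x ^ 2 / 8 - ln (g x).
pose phi' x := - p + x / 4 + p * exp (- x) / g x.
pose phi'' x := (p * exp (- x) - (1 - p)) ^ 2 / (4 * g x ^ 2).
have phi_deriv x : is_derive phi x (phi' x).
  have := g_gt0 x; rewrite /phi /phi' /g => gx_gt0.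
  by auto_derive; [lra | field; lra].
have phi'_deriv x : is_derive phi' x (phi'' x).
  have := g_gt0 x; rewrite /phi' /phi'' /g => gx_gt0.
  by auto_derive; [lra | field; lra].
have phi''_ge0 x : 0 <= phi'' x.
  apply: Rmult_le_pos; first exact: pow2_ge_0.
  by apply/Rlt_le/Rinv_0_lt_compat; have := pow_lt _ 2 (g_gt0 x); lra.
have phi'_ge0 x : 0 <= x -> 0 <= phi' x.
  move=> x_ge0; have -> : 0 = phi' 0 by rewrite /phi' /g Ropp_0 exp_0; field; lra.
  by apply: (le_of_derive_nonneg x_ge0 (fun c _ => phi'_deriv c)).
have phi_ge0 : 0 <= phi l.
  have -> : 0 = phi 0.
    by rewrite /phi /g Ropp_0 exp_0 Rmult_1_r Rplus_assoc Rplus_opp_l Rplus_0_r ln_1 /=; lra.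
  apply: (le_of_derive_nonneg l_ge0 (fun c _ => phi_deriv c)).
  by move=> c [c_ge0 _]; apply: phi'_ge0.
rewrite -[X in X <= _](exp_ln (g l)) //; apply: exp_le_exp; rewrite /phi in phi_ge0; lra.
Qed.

Lemma chernoff_bernoulli (n : nat) (p s l : R) : 0 <= p <= 1 -> 0 <= l ->
  exp (l * s) * (1 - p + p * exp (- l)) ^ n
  <= exp (l * (s - INR n * p) + INR n * l ^ 2 / 8).
Proof.
move=> p01 l_ge0.
have mgf_ge0 : 0 <= 1 - p + p * exp (- l) by have := exp_pos (- l); nra.
apply: (Rle_trans _ (exp (l * s) * exp (- p * l + l ^ 2 / 8) ^ n)).
  apply/Rmult_le_compat_l/pow_incr; first exact/Rlt_le/exp_pos.
  by split; last exact: hoeffding_bernoulli.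
by rewrite exp_pow -exp_plus; apply: exp_le_exp; right; field.
Qed.

Lemma two_le_ln (D : R) : 10 <= D -> 2 <= ln D.
Proof.
move=> D_ge10; rewrite -[2]ln_exp; apply: ln_le; first exact: exp_pos.
have := exp_le_3; have := exp_pos 1.
rewrite -[2]/(1 + 1) exp_plus; nra.
Qed.

Lemma ln_10_lt : ln 10 < 5 / 2.
Proof.
rewrite -[5 / 2]ln_exp; apply: ln_increasing; first lra.
have -> : 5 / 2 = INR 20 * (1 / 8) by rewrite /=; field.
rewrite -exp_pow; apply: (Rlt_le_trans _ ((1 + 1 / 8) ^ 20)); first by rewrite /=; lra.
by apply: pow_incr; split; [lra | exact: exp_ineq1_le].
Qed.

Lemma four_ln_lt (D : R) : 10 <= D -> 4 * ln D < D.
Proof.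
move=> D_ge10; have -> : ln D = ln 10 + ln (D / 10).
  by rewrite -ln_mult; [congr ln; field | lra | lra].
have := exp_ineq1_le (ln (D / 10)); rewrite exp_ln; last lra.
have := ln_10_lt; lra.
Qed.

Definition gv_length_bound (q D : R) : R :=
  q * (D - 1) / (q * (1 - sqrt (ln D / D)) - 1).

Section GVLengthBound.

Variables q D : R.
Hypotheses (q_ge2 : 2 <= q) (D_ge10 : 10 <= D).

Local Notation eps := (sqrt (ln D / D)).
Local Notation bound := (gv_length_bound q D).

Lemma sqrt_ln_div_spec : eps * eps * D = ln D /\ 0 < eps < 1 / 2.
Proof.
have ln_ge2 := two_le_ln D_ge10; have ln_lt := four_ln_lt D_ge10.
have eps_sq : eps * eps * D = ln D.
  by rewrite sqrt_sqrt; [field; lra | apply: Rle_mult_inv_pos; lra].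
have eps_gt0 : 0 < eps by apply/sqrt_lt_R0/Rdiv_lt_0_compat; lra.
have : eps * eps < 1 / 4 by apply: (Rmult_lt_reg_r D); lra.
split=> //; split=> //; nra.
Qed.

Lemma gv_length_bound_eq : bound * (q * (1 - eps) - 1) = q * (D - 1).
Proof.
have [_ [_ eps_lt]] := sqrt_ln_div_spec.
by rewrite /gv_length_bound; field; nra.
Qed.

Lemma le_gv_length_bound : D - 1 <= bound.
Proof.
have [_ [eps_gt0 eps_lt]] := sqrt_ln_div_spec.
apply: (Rmult_le_reg_r (q * (1 - eps) - 1)); first nra.
have : 0 <= (D - 1) * (q * eps) by apply: Rmult_le_pos; nra.
rewrite gv_length_bound_eq; lra.
Qed.

Lemma ln_le_excess_sq (n : nat) : bound - 1 <= INR n <= bound ->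
  0 <= INR n * ((q - 1) / q) - (D - 1) /\
  ln D <= (INR n * ((q - 1) / q) - (D - 1)) ^ 2 / INR n.
Proof.
move=> [n_ge n_le].
(* With a := bound * eps - p one has t >= a, and a^2 >= bound * ln D because
   eps * (bound - D) >= 2 p. *)
have [eps_sq [eps_gt0 eps_lt]] := sqrt_ln_div_spec.
have ln_ge2 := two_le_ln D_ge10; have bound_ge := le_gv_length_bound.
set p := (q - 1) / q; set t := INR n * p - (D - 1).
have p_bounds : 1 / 2 <= p < 1.
  have inv_q := Rinv_0_lt_compat q ltac:(lra).
  have -> : p = 1 - / q by rewrite /p; field; lra.
  split; last lra.
  by have := Rinv_le_contravar 2 q ltac:(lra) q_ge2; lra.
have excess_bound : bound * p - (D - 1) = bound * eps.
  apply: (Rmult_eq_reg_r q); last lra.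
  have -> : (bound * p - (D - 1)) * q = bound * (q - 1) - q * (D - 1).
    by rewrite /p; field; lra.
  by rewrite -gv_length_bound_eq; ring.
have bound_ge_eps : (D - 1) * (1 + eps) <= bound.
  have : D - 1 <= bound * (1 - eps) by nra.
  move/(Rmult_le_compat_r (1 + eps)) => /(_ ltac:(lra)); nra.
have far_enough : 2 * p <= eps * (bound - D).
  have eps_sq_bound : (ln D - eps * eps) * (1 + eps) <= eps * eps * bound.
    have -> : (ln D - eps * eps) * (1 + eps) = eps * eps * ((D - 1) * (1 + eps)).
      by rewrite -{1}eps_sq; ring.
    by apply: Rmult_le_compat_l; nra.
  have : 0 <= eps * (bound * (1 - p)) by apply: Rmult_le_pos; nra.
  have : 0 <= eps * (ln D - 1 - eps - eps * eps) by apply: Rmult_le_pos; nra.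
  nra.
set a := bound * eps - p.
have a_gt0 : 0 < a by rewrite /a; nra.
have a_le_t : a <= t.
  by rewrite /a /t -excess_bound; have := Rmult_le_compat_r p _ _ ltac:(lra) n_ge; lra.
have ln_bound_le : ln D * bound <= a ^ 2.
  have : 0 <= bound * eps * (eps * (bound - D) - 2 * p) by apply: Rmult_le_pos; nra.
  have -> : a ^ 2 = eps * eps * D * bound + (bound * eps * (eps * (bound - D) - 2 * p) + p ^ 2).
    by rewrite /a; ring.
  by rewrite eps_sq; have := pow2_ge_0 p; lra.
have n_gt0 : 0 < INR n by lra.
split; first lra.
apply: (Rmult_le_reg_r (INR n)) => //; rewrite /Rdiv Rmult_assoc Rinv_l; last lra.
nra.
Qed.

End GVLengthBound.

End RealEstimates.

Section BallVolume.

Import ssrnat.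

Lemma INR_predn (n : nat) : 0 < n -> INR n.-1 = (INR n - 1)%R.
Proof. by case: n => // n _; rewrite S_INR /=; ring. Qed.

Lemma INR_expn (a k : nat) : INR (a ^ k) = (INR a ^ k)%R.
Proof. by rewrite RpowE !INRE natrX. Qed.

Lemma card_hamming_ball_le_exp (F : finFieldType) (n D : nat) (u : {ffun 'I_n -> F}) (l : R) :
  0 < D -> (0 <= l)%R ->
  let p := ((INR #|F| - 1) / INR #|F|)%R in
  (INR #|hamming_ball D u|
   <= INR #|F| ^ n * (exp (l * (INR D - 1)) * (1 - p + p * exp (- l)) ^ n))%R.
Proof.
move=> D_gt0 l_ge0 p.
have q_gt1 : (1 < INR #|F|)%R by apply/(lt_INR 1)/ltP/card_finNzRing_gt1.
have x01 : (0 <= exp (- l) <= 1)%R.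
  by split; [exact/Rlt_le/exp_pos | rewrite -exp_0; apply: exp_le_exp; lra].
have : (INR #|hamming_ball D u| * exp (- l) ^ D.-1
        <= (1 + INR #|F|.-1 * exp (- l)) ^ n)%R.
  rewrite !RpowE !INRE; apply/RleP/card_hamming_ball_le.
  by case: x01 => x_ge0 x_le1; apply/andP; split; apply/RleP.
rewrite INR_predn; last exact: leq_trans (card_finNzRing_gt1 F).
have -> : (1 + (INR #|F| - 1) * exp (- l) = INR #|F| * (1 - p + p * exp (- l)))%R.
  by rewrite /p; field; lra.
rewrite Rpow_mult_distr exp_pow INR_predn // => weight_le.
have l_cancel : (exp ((INR D - 1) * - l) * exp (l * (INR D - 1)) = 1)%R.
  by rewrite -exp_plus -exp_0; congr exp; ring.
have := Rmult_le_compat_r _ _ _ (Rlt_le _ _ (exp_pos (l * (INR D - 1)))) weight_le.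
by rewrite Rmult_assoc l_cancel Rmult_1_r => /Rle_trans; apply; right; ring.
Qed.

Lemma sq_mul_card_hamming_ball_le (F : finFieldType) (n D : nat) (u : {ffun 'I_n -> F}) :
  0 < n -> 0 < D ->
  let t := (INR n * ((INR #|F| - 1) / INR #|F|) - (INR D - 1))%R in
  (0 <= t)%R -> (ln (INR D) <= t ^ 2 / INR n)%R ->
  D ^ 2 * #|hamming_ball D u| <= #|F| ^ n.
Proof.
move=> n_gt0 D_gt0; cbv zeta.
set q := INR #|F|; set p := ((q - 1) / q)%R; set t := (INR n * p - (INR D - 1))%R.
move=> t_ge0 ln_le; apply/leP/INR_le; rewrite mult_INR !INR_expn -/q.
have n_gt0R : (0 < INR n)%R by apply: (lt_INR 0); apply/ltP.
have D_gt0R : (0 < INR D)%R by apply: (lt_INR 0); apply/ltP.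
have q_gt1 : (1 < q)%R by apply/(lt_INR 1)/ltP/card_finNzRing_gt1.
have p01 : (0 <= p <= 1)%R.
  have p_eq : (p = 1 - / q)%R by rewrite /p; field; lra.
  split; first by rewrite /p; apply: Rle_mult_inv_pos; lra.
  by rewrite p_eq; have := Rinv_0_lt_compat q ltac:(lra); lra.
(* [l = 4 t / n] minimizes the Chernoff exponent [- l t + n l^2 / 8]. *)
pose l := (4 * t / INR n)%R.
have l_ge0 : (0 <= l)%R by apply: Rle_mult_inv_pos; lra.
have exponent : (l * (INR D - 1 - INR n * p) + INR n * l ^ 2 / 8 = - 2 * (t ^ 2 / INR n))%R.
  by rewrite /l /t; field; lra.
have ball_le : (INR #|hamming_ball D u| <= q ^ n * exp (- 2 * ln (INR D)))%R.
  apply: (Rle_trans _ _ _ (card_hamming_ball_le_exp u D_gt0 l_ge0)).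
  rewrite -/q -/p; apply: Rmult_le_compat_l; first by apply: pow_le; lra.
  apply: (Rle_trans _ _ _ (chernoff_bernoulli n (INR D - 1) p01 l_ge0)).
  by apply: exp_le_exp; rewrite exponent; lra.
have sq_exp : (INR D ^ 2 * exp (- 2 * ln (INR D)) = 1)%R.
  have -> : (- 2 * ln (INR D) = INR 2 * - ln (INR D))%R by rewrite /=; ring.
  by rewrite -exp_pow exp_Ropp exp_ln //; field; lra.
have := Rmult_le_compat_l _ _ _ (pow_le _ 2 (Rlt_le _ _ D_gt0R)) ball_le.
by rewrite (Rmult_comm (q ^ n)) -Rmult_assoc sq_exp Rmult_1_l.
Qed.

End BallVolume.

Theorem lemma4p8 (F : finFieldType) (M D : nat) :
  10 <= D -> M <= D ^ 2 ->
  (INR (N_H F M D) <=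
     INR #|F| * (INR D - 1) /
       (INR #|F| * (1 - sqrt (ln (INR D) / INR D)) - 1))%R.
Proof.
move=> D_ge10 M_le.
have q_ge2 : (2 <= INR #|F|)%R.
  by have := le_INR 2 _ (leP (card_finNzRing_gt1 F)); rewrite [INR 2]INR_IZR_INZ.
have D_ge10R : (10 <= INR D)%R.
  by have := le_INR 10 _ (leP D_ge10); rewrite [INR 10]INR_IZR_INZ.
have bound_ge := le_gv_length_bound q_ge2 D_ge10R.
have [n [n_le n_gt]] := nfloor_ex (gv_length_bound (INR #|F|) (INR D)) ltac:(lra).
have [t_ge0 ln_le] : _ /\ _ := ln_le_excess_sq (n := n) q_ge2 D_ge10R ltac:(lra).
have n_gt0 : 0 < n by apply/ltP/INR_lt; rewrite [INR 0]/=; lra.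
have D_gt0 : 0 < D by apply: leq_trans D_ge10.
suff /N_H_le/leP/le_INR/Rle_trans : code_ok F M D n by apply.
have M_le_sq : M <= expn D 2 by rewrite -mulnn; move: M_le; rewrite /= Nat.mul_1_r.
apply: gilbert_varshamov => u.
apply: leq_trans (sq_mul_card_hamming_ball_le u n_gt0 D_gt0 t_ge0 ln_le).
by rewrite leq_mul2r M_le_sq orbT.
Qed.
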